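(* Let $(X,d,G)$ be a $G$-system, $\{F_n\}$ a Følner sequence of $G$, and $Z$ a nonempty subset of $X$. Then: (1) if $\overline{\mathrm{mdim}}_M(G,Z,\{F_n\},d)=\infty$, then $\overline{D}_M(G,Z,\{F_n\},d)\ge1$; (2) if $\overline{\mathrm{mdim}}_M(G,Z,\{F_n\},d)<\infty$, then $0\le\overline{D}_M(G,Z,\{F_n\},d)\le1$; (3) if $0<\overline{\mathrm{mdim}}_M(G,Z,\{F_n\},d)<\infty$, then $\overline{D}_M(G,Z,\{F_n\},d)=1$.
   Context: $G$ is a countably infinite discrete amenable group; $(X,d,G)$ a compact metric space with continuous $G$-action by homeomorphisms; $\{F_n\}$ nonempty finite subsets of $G$ with $|gF_n\triangle F_n|/|F_n|\to0$ for all $g$. $d_F(x,y)=\max_{g\in F}d(gx,gy)$; $s(Z,d_F,\epsilon)$ is the maximal cardinality of a subset of $Z$ with pairwise $d_F$-distances $>\epsilon$; $h_{top}(G,Z,d,\{F_n\},\epsilon)=\limsup_n\frac1{|F_n|}\log s(Z,d_{F_n},\epsilon)$. For $s>0$, $\overline{\mathrm{mdim}}_M(G,Z,\{F_n\},s,d)=\limsup_{\epsilon\to0}h_{top}(G,Z,d,\{F_n\},\epsilon)/(\log\frac1\epsilon)^s$; $\overline{\mathrm{mdim}}_M(G,Z,\{F_n\},d)$ is the case $s=1$. The infinite upper entropy dimension is $\overline{D}_M(G,Z,\{F_n\},d)=\inf\{s>0:\overline{\mathrm{mdim}}_M(G,Z,\{F_n\},s,d)=0\}$. *)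

From HB Require Import structures.
From mathcomp Require Import all_boot all_order all_algebra finmap.
From mathcomp Require Import all_classical all_reals all_analysis.
Set Implicit Arguments. Unset Strict Implicit. Unset Printing Implicit Defensive.
Import Order.TTheory GRing.Theory Num.Theory.
Import numFieldNormedType.Exports.
Local Open Scope classical_set_scope.
Local Open Scope ring_scope.

Definition is_group (G : Type) (mul : G -> G -> G) (one : G) (inv : G -> G) : Prop :=
  [/\ forall a b c, mul a (mul b c) = mul (mul a b) c,
      forall a, mul one a = a /\ mul a one = a
    & forall a, mul (inv a) a = one /\ mul a (inv a) = one].

(* A continuous left action of G on X by homeomorphisms (continuity of each
   map plus the action axioms; the inverse of act g is act (inv g)). *)
Definition is_cont_action (G : Type) (X : topologicalType)
    (mul : G -> G -> G) (one : G) (act : G -> X -> X) : Prop :=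
  [/\ forall x, act one x = x,
      forall g h x, act (mul g h) x = act g (act h x)
    & forall g, continuous (act g)].

Definition ltrans (G : choiceType) (mul : G -> G -> G) (g : G) (F : {fset G}) : {fset G} :=
  [fset mul g x | x in F]%fset.
Definition fsymdiff (G : choiceType) (A B : {fset G}) : {fset G} :=
  ((A `\` B) `|` (B `\` A))%fset.

Definition folner (R : realType) (G : choiceType) (mul : G -> G -> G)
    (F : nat -> {fset G}) : Prop :=
  (forall n, F n != fset0) /\
  forall g, (fun n => (#|` fsymdiff (ltrans mul g (F n)) (F n)|%:R / #|` F n|%:R : R))
              @ \oo --> (0 : R).

Section mdim.
Context {R : realType} {G : choiceType} {X : metricType R}.
Variable act : G -> X -> X.

Definition dF (F : {fset G}) (x y : X) : R :=
  \big[Num.max/0]_(g <- F) mdist (act g x) (act g y).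

Definition separated (Z : set X) (F : {fset G}) (eps : R) (A : {fset X}) : Prop :=
  [set` A] `<=` Z /\
  forall x y, x \in A -> y \in A -> x != y -> eps < dF F x y.

(* s(Z, d_F, eps): maximal cardinality of a separated subset (as an extended
   real, a supremum; it is finite for compact X). *)
Definition sep_num (Z : set X) (F : {fset G}) (eps : R) : \bar R :=
  ereal_sup [set (#|` A|%:R)%:E | A in separated Z F eps].

Definition eln (x : \bar R) : \bar R :=
  match x with
  | r%:E => (ln r)%:E
  | +oo => +oo
  | -oo => -oo
  end%E.

Definition htop (Z : set X) (F : nat -> {fset G}) (eps : R) : \bar R :=
  limn_esup (fun n => ((#|` F n|%:R)^-1)%:E * eln (sep_num Z (F n) eps))%E.

Definition mdimM_s (Z : set X) (F : nat -> {fset G}) (s : R) : \bar R :=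
  limf_esup (fun eps : R => htop Z F eps * ((powR (ln (eps^-1)) s)^-1)%:E)%E
            (0 : R)^'+.

Definition mdimM (Z : set X) (F : nat -> {fset G}) : \bar R := mdimM_s Z F 1.

Definition DM (Z : set X) (F : nat -> {fset G}) : \bar R :=
  ereal_inf [set s%:E | s in [set s : R | 0 < s /\ mdimM_s Z F s = 0%E]].

End mdim.

(* Near eps = 0 we have ln (1/eps) >= 1, so the normalising factor
   (ln (1/eps))^s grows with s and s |-> mdim_s is nonincreasing.  If mdim_s is
   finite and t > s, the extra factor (ln (1/eps))^(s - t) tends to 0, so
   mdim_t = 0.  Hence D_M lies above every s with mdim_s > 0 and below every
   s >= 0 with mdim_s finite; the theorem is the case s = 1. *)

From HB Require Import structures.
From mathcomp Require Import all_boot all_order all_algebra finmap.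
From mathcomp Require Import all_classical all_reals all_analysis.
Import Order.TTheory GRing.Theory Num.Theory.
Import numFieldNormedType.Exports.
Local Open Scope classical_set_scope.
Local Open Scope ring_scope.
Local Open Scope ereal_scope.

Section limf_esup_near.
Context {R : realType} {T : choiceType} {U : filteredType T}.
Variables (F : set_system U) (f g : U -> \bar R).
Context {FF : Filter F}.

Lemma limf_esup_le_near :
  (\forall x \near F, f x <= g x) -> limf_esup f F <= limf_esup g F.
Proof.
move=> fg; rewrite !limf_esupE; apply: le_ereal_inf_tmp => _ [V FV <-].
apply: (le_trans (ereal_inf_lbound _)).
  by exists (V `&` [set x | f x <= g x]) => //; exact: filterI.
apply: ge_ereal_sup => _ [x [Vx fgx] <-].
by apply: (le_trans fgx); apply: ereal_sup_ubound; exists x.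
Qed.

Lemma limf_esup_le_cst_near (c : \bar R) :
  (\forall x \near F, f x <= c) -> limf_esup f F <= c.
Proof.
move=> fc; apply: (le_trans (ereal_inf_lbound _)).
  by exists [set x | f x <= c].
by apply: ge_ereal_sup => _ [x fxc <-].
Qed.

Lemma limf_esup_lt_near (c : \bar R) :
  limf_esup f F < c -> \forall x \near F, f x < c.
Proof.
move=> /ereal_inf_lt[_ [V FV <-] Vc]; apply: filterS FV => x Vx.
by apply: le_lt_trans Vc; apply: ereal_sup_ubound; exists x.
Qed.

End limf_esup_near.

Section ln_inv_near_0.
Context {R : realType}.
Local Open Scope ring_scope.

Lemma ln_inv_ge_near (K : R) : \forall e \near 0^'+, K <= ln e^-1.
Proof.
near=> e.
have e0 : 0 < e by near: e; exact: nbhs_right_gt.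
have eK : e < expR (- K) by near: e; apply: nbhs_right_lt; exact: expR_gt0.
by rewrite lnV ?posrE // lerNr -(expRK (- K)) ler_ln ?posrE ?expR_gt0 // ltW.
Unshelve. all: by end_near.
Qed.

Lemma powR_ln_inv_le_near (r e : R) : r < 0 -> 0 < e ->
  \forall x \near 0^'+, (ln x^-1) `^ r <= e.
Proof.
move=> r0 e0; near=> x.
set b := (e^-1) `^ (- r)^-1.
have bx : Num.max 1 b <= ln x^-1 by near: x; exact: ln_inv_ge_near.
have lnx0 : 0 < ln x^-1 by apply: lt_le_trans bx; rewrite lt_max ltr01.
have nr0 : 0 < - r by rewrite oppr_gt0.
rewrite -[r]opprK powRN -[e]invrK lef_pV2 ?posrE ?powR_gt0 ?invr_gt0 //.
have -> : e^-1 = b `^ (- r).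
  by rewrite -powRrM mulVf ?gt_eqF // powRr1 // invr_ge0 ltW.
apply: ge0_ler_powR; rewrite ?nnegrE ?powR_ge0 ?(ltW nr0) ?(ltW lnx0) //.
by apply: le_trans bx; rewrite le_max lexx orbT.
Unshelve. all: by end_near.
Qed.

End ln_inv_near_0.

Section upper_metric_mean_dimension.
Context {R : realType} {G : choiceType} {X : metricType R}.
Variables (act : G -> X -> X) (Z : set X) (F : nat -> {fset G}).
Hypothesis Z0 : Z !=set0.

Lemma sep_num_ge1 (E : {fset G}) (eps : R) : 1 <= sep_num act Z E eps.
Proof.
case: Z0 => x Zx; apply: ereal_sup_ge; exists 1 => //.
exists [fset x]%fset; last by rewrite cardfs1.
split; first by move=> y /=; rewrite in_fset1 => /eqP ->.
by move=> a b; rewrite !in_fset1 => /eqP -> /eqP ->; rewrite eqxx.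
Qed.

Lemma htop_ge0 (eps : R) : 0 <= htop act Z F eps.
Proof.
apply: limf_esup_ge0; first exact: filter_not_empty.
move=> n; apply: mule_ge0; first by rewrite lee_fin invr_ge0.
have := sep_num_ge1 (F n) eps.
by case: (sep_num act Z (F n) eps) => //= r; rewrite !lee_fin; exact: ln_ge0.
Qed.

Lemma mdimM_s_ge0 (s : R) : 0 <= mdimM_s act Z F s.
Proof.
apply: limf_esup_ge0; first exact: filter_not_empty.
move=> eps; apply: mule_ge0; first exact: htop_ge0.
by rewrite lee_fin invr_ge0 powR_ge0.
Qed.

Lemma mdimM_s_nonincreasing {s t : R} : (s <= t)%R -> mdimM_s act Z F t <= mdimM_s act Z F s.
Proof.
move=> st; apply: limf_esup_le_near; near=> eps.
have lneps_ge1 : (1 <= ln eps^-1)%R by near: eps; exact: ln_inv_ge_near.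
have lneps_gt0 := lt_le_trans ltr01 lneps_ge1.
apply: lee_wpmul2l; first exact: htop_ge0.
by rewrite lee_fin lef_pV2 ?posrE ?powR_gt0 // ler_powR.
Unshelve. all: by end_near.
Qed.

Lemma mdimM_s_eq0 (s t : R) : (s < t)%R -> mdimM_s act Z F s < +oo ->
  mdimM_s act Z F t = 0.
Proof.
move=> st ms; apply/eqP; rewrite eq_le mdimM_s_ge0 andbT.
have [M M0 msM] : exists2 M : R, (0 < M)%R & mdimM_s act Z F s < M%:E.
  exists (fine (mdimM_s act Z F s) + 1)%R.
    by rewrite ltr_wpDl ?fine_ge0 ?mdimM_s_ge0.
  by rewrite -[X in X < _]fineK ?lte_fin ?ltrDl // ge0_fin_numE ?mdimM_s_ge0.
apply/lee_addgt0Pr => e e0; rewrite add0e; apply: limf_esup_le_cst_near.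
near=> eps.
have lneps_ge1 : (1 <= ln eps^-1)%R by near: eps; exact: ln_inv_ge_near.
have lneps_gt0 := lt_le_trans ltr01 lneps_ge1.
have fsM : htop act Z F eps * ((ln eps^-1 `^ s)^-1)%:E < M%:E.
  by near: eps; exact: limf_esup_lt_near.
have small : (ln eps^-1 `^ (s - t) <= e / M)%R.
  by near: eps; apply: powR_ln_inv_le_near; rewrite ?subr_lt0 ?divr_gt0.
have -> : ((ln eps^-1 `^ t)^-1 = (ln eps^-1 `^ s)^-1 * ln eps^-1 `^ (s - t))%R.
  by rewrite powRB ?(gt_eqF lneps_gt0) ?implybT // mulKf ?gt_eqF ?powR_gt0.
rewrite EFinM muleA; apply: (le_trans (lee_wpmul2r _ (ltW fsM))).
  by rewrite lee_fin powR_ge0.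
rewrite -EFinM lee_fin (le_trans (ler_wpM2l (ltW M0) small)) //.
by rewrite mulrCA mulfV ?gt_eqF // mulr1.
Unshelve. all: by end_near.
Qed.

Lemma DM_ge0 : 0 <= DM act Z F.
Proof. by apply: le_ereal_inf_tmp => _ [t [t0 _] <-]; rewrite lee_fin ltW. Qed.

Lemma DM_ge (s : R) : 0 < mdimM_s act Z F s -> s%:E <= DM act Z F.
Proof.
move=> ms0; apply: le_ereal_inf_tmp => _ [t [t0 mt0] <-].
rewrite lee_fin leNgt; apply/negP => ts.
by have := lt_le_trans ms0 (mdimM_s_nonincreasing (ltW ts)); rewrite mt0 ltxx.
Qed.

Lemma DM_le (s : R) : (0 <= s)%R -> mdimM_s act Z F s < +oo -> DM act Z F <= s%:E.
Proof.
move=> s0 ms; apply/lee_addgt0Pr => e e0; apply: ereal_inf_lbound.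
exists (s + e)%R; last by rewrite EFinD.
split; first by rewrite ltr_wpDl.
by apply: mdimM_s_eq0 ms; rewrite ltrDl.
Qed.

End upper_metric_mean_dimension.

Theorem theorem3p41 (R : realType) (G : countType)
    (mul : G -> G -> G) (one : G) (inv : G -> G)
    (X : metricType R) (act : G -> X -> X) (F : nat -> {fset G}) (Z : set X) :
  is_group mul one inv ->
  infinite_set [set: G] ->
  compact [set: X] ->
  is_cont_action mul one act ->
  folner R mul F ->
  Z !=set0 ->
  [/\ mdimM act Z F = +oo -> 1 <= DM act Z F,
      mdimM act Z F < +oo -> 0 <= DM act Z F /\ DM act Z F <= 1
    & 0 < mdimM act Z F < +oo -> DM act Z F = 1].
Proof.
move=> _ _ _ _ _ Z0; split.
- by move=> moo; apply: DM_ge => //; rewrite [mdimM_s _ _ _ _]moo.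
- by move=> mfin; split; [exact: DM_ge0 | exact: DM_le].
- by move=> /andP[mpos mfin]; apply: le_anti; rewrite DM_le //= DM_ge.
Qed.
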